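(* Let $D$ be an integral domain and let $M$ be a torsion-free $D$-module which is a $w$-module. Then the following are equivalent: (1) $M$ is an SM-module; (2) $M$ is a $P$-SM-module for all prime $w$-ideals $P$ of $D$; (3) $M$ is an $\mathfrak{m}$-SM-module for all maximal $w$-ideals $\mathfrak{m}$ of $D$.
   Context: Let $K$ be the quotient field of $D$; $I_v=(I^{-1})^{-1}$ with $I^{-1}=\{a\in K\mid aI\subseteq D\}$; $\mathrm{GV}(D)$ is the set of finitely generated ideals $J$ with $J_v=D$. For a torsion-free module $N$, $N_w=\{x\in N\otimes K\mid xJ\subseteq N\text{ for some }J\in\mathrm{GV}(D)\}$; $N$ is a $w$-module if $N_w=N$; a $w$-ideal is an ideal that is a $w$-module; maximal $w$-ideals are proper $w$-ideals maximal among proper $w$-ideals. A $w$-module $M$ is an SM-module (strong Mori module) if it satisfies the ascending chain condition on $w$-submodules, equivalently every $w$-submodule $L$ is $w$-finite ($L=F_w$ for some finitely generated $F$). For a multiplicative set $S$, a submodule $N$ is $S$-$w$-finite if there exist $s\in S$ and a finitely generated submodule $F$ of $M$ with $Ns\subseteq F_w\subseteq N_w$, and $M$ is an $S$-SM-module if every $w$-submodule is $S$-$w$-finite. For a prime ideal $P$, $M$ is a $P$-SM-module if it is a $(D\setminus P)$-SM-module. *)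

From mathcomp Require Import all_boot all_order all_algebra.
From mathcomp Require Import fraction.
Set Implicit Arguments. Unset Strict Implicit. Unset Printing Implicit Defensive.
Import GRing.Theory.
Local Open Scope ring_scope.

(* A torsion-free D-module M is represented inside the K-vector space V
   (playing the role of M (x) K) as a D-submodule M : V -> Prop.
   Subsets are predicates T -> Prop. *)

Section WTheory.
Variable D : idomainType.
Local Notation K := {fraction D}.
Local Notation inK := (@FracField.tofrac D).

Definition is_ideal (I : D -> Prop) : Prop :=
  [/\ I 0, (forall a b, I a -> I b -> I (a + b)) & (forall d a, I a -> I (d * a))].

Definition gen_ideal (s : seq D) : D -> Prop :=
  fun x => exists c : 'I_(size s) -> D, x = \sum_(i < size s) c i * s`_i.

Definition frac_inv (I : D -> Prop) : K -> Prop :=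
  fun a => forall x, I x -> exists d : D, a * inK x = inK d.

Definition v_closure (I : D -> Prop) : K -> Prop :=
  fun b => forall a, frac_inv I a -> exists d : D, b * a = inK d.

Definition isGV (s : seq D) : Prop :=
  forall b : K, v_closure (gen_ideal s) b <-> exists d : D, b = inK d.

Definition ideal_wcl (I : D -> Prop) : K -> Prop :=
  fun x => exists s, isGV s /\
    forall j, gen_ideal s j -> exists p, I p /\ x * inK j = inK p.

Definition is_wideal (I : D -> Prop) : Prop :=
  is_ideal I /\ forall x : K, ideal_wcl I x <-> exists p, I p /\ x = inK p.

Definition is_prime_wideal (P : D -> Prop) : Prop :=
  [/\ is_wideal P, ~ P 1 & forall a b, P (a * b) -> P a \/ P b].

Definition is_max_wideal (P : D -> Prop) : Prop :=
  [/\ is_wideal P, ~ P 1 &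
     forall Q : D -> Prop, is_wideal Q -> ~ Q 1 ->
       (forall x, P x -> Q x) -> forall x, Q x -> P x].

Variable V : lmodType K.

Definition is_Dsubmod (N : V -> Prop) : Prop :=
  [/\ N 0, (forall x y, N x -> N y -> N (x + y))
         & (forall d x, N x -> N (inK d *: x))].

Definition wcl (N : V -> Prop) : V -> Prop :=
  fun x => exists s, isGV s /\ forall j, gen_ideal s j -> N (inK j *: x).

Definition is_wmod (N : V -> Prop) : Prop :=
  is_Dsubmod N /\ forall x, wcl N x <-> N x.

Definition is_wsubmod (M L : V -> Prop) : Prop :=
  is_wmod L /\ forall x, L x -> M x.

Definition span_fg (g : seq V) : V -> Prop :=
  fun x => exists c : 'I_(size g) -> D, x = \sum_(i < size g) inK (c i) *: g`_i.

Definition is_SM (M : V -> Prop) : Prop :=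
  is_wmod M /\
  forall L : nat -> V -> Prop,
    (forall n, is_wsubmod M (L n)) ->
    (forall n x, L n x -> L n.+1 x) ->
    exists n0, forall n, (n0 <= n)%N -> forall x, L n x <-> L n0 x.

Definition is_mult_set (S : D -> Prop) : Prop :=
  S 1 /\ forall a b, S a -> S b -> S (a * b).

Definition S_w_finite (S : D -> Prop) (M N : V -> Prop) : Prop :=
  exists s, S s /\ exists g : seq V, (forall v, v \in g -> M v) /\
    (forall x, N x -> wcl (span_fg g) (inK s *: x)) /\
    (forall x, wcl (span_fg g) x -> wcl N x).

Definition is_S_SM (S : D -> Prop) (M : V -> Prop) : Prop :=
  is_wmod M /\ forall L, is_wsubmod M L -> S_w_finite S M L.

Definition is_P_SM (P : D -> Prop) (M : V -> Prop) : Prop :=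
  is_S_SM (fun d => ~ P d) M.

End WTheory.

(* A w-submodule N of an SM-module is w-finite, N = F_w with F finitely
   generated, so it is S-w-finite with s = 1 for every S.  Conversely, let N be
   the union of an ascending chain of w-submodules.  The s in D such that
   sN is contained in F_w for some finitely generated F inside N form an ideal,
   and local finiteness at a maximal w-ideal m yields such an s outside m.
   By Zorn's lemma an ideal containing no member of GV(D) lies in a maximal
   such ideal, and that ideal is a prime maximal w-ideal.  Hence our ideal
   contains some J in GV(D); then JN lies in F_w, so N = F_w and the chain
   stabilises once it contains the generators of F. *)

From mathcomp Require Import all_boot all_order all_algebra fraction.
From mathcomp Require Import boolp classical_sets.
Set Implicit Arguments. Unset Strict Implicit. Unset Printing Implicit Defensive.
Import GRing.Theory.
Local Open Scope ring_scope.

Definition is_chain (I T : Type) (A : I -> Prop) (X : I -> T -> Prop) : Prop :=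
  forall i j, A i -> A j -> (forall x, X i x -> X j x) \/ (forall x, X j x -> X i x).

Section Chains.
Variables (T : eqType) (I : Type) (A : I -> Prop) (X : I -> T -> Prop).
Hypothesis chainX : is_chain A X.

Lemma chain_seq_bound i0 (s : seq T) : A i0 ->
  (forall y, y \in s -> exists2 i, A i & X i y) ->
  exists2 i, A i & forall y, y \in s -> X i y.
Proof.
move=> Ai0; elim: s => [|y s IHs] ys; first by exists i0.
have [i Ai Xiy] := ys y (mem_head y s).
have [j Aj Xjs] := IHs (fun z zs => ys z (predU1r _ _ zs)).
have [Xij | Xji] := chainX Ai Aj.
- by exists j => // z; rewrite inE => /predU1P [-> | /Xjs]; [exact: Xij|].
- by exists i => // z; rewrite inE => /predU1P [-> | /Xjs /Xji].
Qed.

End Chains.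

Section IncreasingSequences.
Variables (T : Type) (L : nat -> T -> Prop).
Hypothesis L_succ : forall n x, L n x -> L n.+1 x.

Lemma increasing_le m n : (m <= n)%N -> forall x, L m x -> L n x.
Proof.
apply: (@homo_leq _ L (fun A B => forall x, A x -> B x) _ _ L_succ) => [A x //|B A C AB BC x].
by move/AB/BC.
Qed.

Lemma increasing_chain : is_chain (fun _ => True) L.
Proof. by move=> m n _ _; case/orP: (leq_total m n) => /increasing_le; [left | right]. Qed.

End IncreasingSequences.

Section Ideals.
Variable D : idomainType.
Local Notation K := {fraction D}.
Local Notation inK := (@FracField.tofrac D).

Lemma tofrac_inj : injective inK.
Proof. by move=> a b /eqP; rewrite tofrac_eq => /eqP. Qed.

Lemma gen_ideal_ind (P : D -> Prop) (s : seq D) :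
  P 0 -> (forall a b, P a -> P b -> P (a + b)) ->
  (forall d y, y \in s -> P (d * y)) -> forall x, gen_ideal s x -> P x.
Proof.
move=> P0 PD PM x [c ->]; elim/big_ind: _ => // i _.
by apply: PM; apply: mem_nth.
Qed.

Lemma gen_ideal_mem (s : seq D) y : y \in s -> gen_ideal s y.
Proof.
move=> ys; have ys_lt : (index y s < size s)%N by rewrite index_mem.
exists (fun i => ((i : nat) == index y s)%:R).
rewrite (bigD1 (Ordinal ys_lt)) //= eqxx mul1r nth_index // big1 ?addr0 //.
by move=> i; rewrite -val_eqE /= => /negbTE ->; rewrite mul0r.
Qed.

Lemma gen_ideal_min (J : D -> Prop) (s : seq D) : is_ideal J ->
  (forall y, y \in s -> J y) -> forall x, gen_ideal s x -> J x.
Proof. by move=> [J0 JD JM] sJ; apply: gen_ideal_ind => // d y /sJ /JM. Qed.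

Lemma isGVP (s : seq D) : isGV s <->
  (forall a : K, (forall y, y \in s -> exists d, a * inK y = inK d) ->
     exists d, a = inK d).
Proof.
split=> [GVs a sa | GVs b].
- have a_inv : frac_inv (gen_ideal s) a.
    apply: gen_ideal_ind => [|x y [u xu] [v yv]|d y /sa [u au]].
    + by exists 0; rewrite mulr0.
    + by exists (u + v); rewrite !tofracD mulrDr xu yv.
    + by exists (d * u); rewrite tofracM mulrCA au tofracM.
  have [_ /(_ (ex_intro _ 1 (esym (tofrac1 D)))) one_v] := GVs 1.
  by have [d ad] := one_v a a_inv; exists d; rewrite -ad mul1r.
split=> [bv | [d -> a a_inv]].
- have [d bd] := bv 1 (fun x _ => ex_intro _ x (mul1r _)).
  by exists d; rewrite -bd mulr1.
- have [e ->] := GVs a (fun y ys => a_inv y (gen_ideal_mem ys)).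
  by exists (d * e); rewrite tofracM.
Qed.

Lemma isGV1 : isGV [:: 1 : D].
Proof.
by apply/isGVP => a /(_ 1 (mem_head _ _)); rewrite tofrac1 mulr1.
Qed.

Lemma isGV_mul (s t : seq D) : isGV s -> isGV t ->
  isGV [seq x * y | x <- s, y <- t].
Proof.
move=> /isGVP GVs /isGVP GVt; apply/isGVP => a st_a.
apply: GVs => x xs; apply: GVt => y yt.
by rewrite -mulrA -tofracM; apply/st_a/allpairs_f.
Qed.

(* A finite family of GV ideals can be replaced by their product. *)
Lemma isGV_common (R : D -> D -> Prop) (s : seq D) :
  (forall y u d, R y u -> R y (d * u)) ->
  (forall y, y \in s -> exists2 t, isGV t & forall u, u \in t -> R y u) ->
  exists2 t, isGV t & forall y u, y \in s -> u \in t -> R y u.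
Proof.
move=> RM; elim: s => [|y s IHs] sR; first by exists [:: 1]; first exact: isGV1.
have [t1 GVt1 Ryt1] := sR y (mem_head y s).
have [t2 GVt2 Rst2] := IHs (fun z zs => sR z (predU1r _ _ zs)).
exists [seq a * b | a <- t1, b <- t2]; first exact: isGV_mul.
move=> z _ + /allpairsP [[a b] [/= at1 bt2 ->]].
rewrite inE => /predU1P [-> | zs].
- by rewrite mulrC; apply/RM/Ryt1.
- exact/RM/Rst2.
Qed.

Definition has_GV (J : D -> Prop) : Prop :=
  exists2 s, isGV s & forall y, y \in s -> J y.

(* wclD J is the trace J_w \cap D of the w-closure of J. *)
Definition wclD (J : D -> Prop) : D -> Prop :=
  fun z => exists2 t, isGV t & forall y, y \in t -> J (z * y).

Lemma wclD_sub (J : D -> Prop) z : J z -> wclD J z.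
Proof.
by move=> Jz; exists [:: 1]; [exact: isGV1 | move=> y; rewrite inE => /eqP ->; rewrite mulr1].
Qed.

Lemma wclD_ideal (J : D -> Prop) : is_ideal J -> is_ideal (wclD J).
Proof.
move=> [J0 JD JM]; split=> [|a b [t1 GVt1 at1] [t2 GVt2 bt2]|d a [t GVt taJ]].
- by apply: wclD_sub.
- exists [seq x * y | x <- t1, y <- t2]; first exact: isGV_mul.
  move=> _ /allpairsP [[x y] [/= xt1 yt2 ->]]; rewrite mulrDl.
  by apply: JD; [rewrite mulrA mulrC | rewrite mulrCA]; apply/JM; [apply: at1 | apply: bt2].
- by exists t => // y /taJ; rewrite -mulrA; apply: JM.
Qed.

Lemma has_GV_wclD (J : D -> Prop) : is_ideal J -> has_GV (wclD J) -> has_GV J.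
Proof.
move=> [_ _ JM] [t GVt tJ].
have [u GVu tuJ] : exists2 u, isGV u & forall y x, y \in t -> x \in u -> J (y * x).
  apply: isGV_common => [y x d|y /tJ //]; rewrite mulrCA; apply: JM.
exists [seq y * x | y <- t, x <- u]; first exact: isGV_mul.
by move=> _ /allpairsP [[y x] [/= yt xu ->]]; apply: tuJ.
Qed.

Lemma ideal_wcl_wclD (J : D -> Prop) x :
  ideal_wcl J x -> exists2 d, x = inK d & wclD J d.
Proof.
move=> [s [GVs sJ]].
have [d xd] : exists d, x = inK d.
  apply: (proj1 (isGVP s) GVs) => y /gen_ideal_mem /sJ [p [_ ->]].
  by exists p.
exists d => //; exists s => // y /gen_ideal_mem /sJ [p [Jp]].
by rewrite xd -tofracM => /tofrac_inj ->.
Qed.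

Lemma ideal_wcl_tofrac (J : D -> Prop) p : is_ideal J -> J p -> ideal_wcl J (inK p).
Proof.
move=> [_ _ JM] Jp; exists [:: 1]; split=> [|j _]; first exact: isGV1.
by exists (p * j); rewrite tofracM; split=> //; rewrite mulrC; apply: JM.
Qed.

Lemma wideal_GV_free (P : D -> Prop) : is_wideal P -> ~ P 1 -> ~ has_GV P.
Proof.
move=> [idP wP] P1 [s GVs sP]; apply: P1.
have [|p [Pp]] := (wP 1).1.
  exists s; split=> // j sj; exists j; split; last by rewrite mul1r.
  exact: gen_ideal_min idP sP j sj.
by rewrite -tofrac1 => /tofrac_inj ->.
Qed.

Lemma chain_union_GV_free (I : Type) (A : I -> Prop) (J : I -> D -> Prop) i0 :
  A i0 -> is_chain A J -> (forall i, A i -> is_ideal (J i) /\ ~ has_GV (J i)) ->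
  let U := fun x => exists2 i, A i & J i x in is_ideal U /\ ~ has_GV U.
Proof.
move=> Ai0 chainJ AJ U.
have bound (s : seq D) :
    (forall y, y \in s -> U y) -> exists2 i, A i & forall y, y \in s -> J i y.
  by move=> sU; apply: (chain_seq_bound chainJ Ai0) => y /sU.
split; first split.
- by exists i0 => //; have [[]] := AJ i0 Ai0.
- move=> a b Ua Ub; have [|i Ai abJ] := bound [:: a; b].
    by move=> y; rewrite !inE => /orP [] /eqP ->.
  exists i => //; have [[_ JD _] _] := AJ i Ai.
  by apply: JD; apply: abJ; rewrite !inE eqxx ?orbT.
- move=> d a [i Ai Jia]; exists i => //.
  by have [[_ _ JM] _] := AJ i Ai; apply: JM.
- move=> [s GVs sU]; have [i Ai sJ] := bound s sU.
  by have [_] := AJ i Ai; apply; exists s.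
Qed.

Lemma max_GV_free_over (J : D -> Prop) : is_ideal J -> ~ has_GV J ->
  exists Q, [/\ is_ideal Q, ~ has_GV Q, (forall x, J x -> Q x) &
    forall B, is_ideal B -> ~ has_GV B -> (forall x, Q x -> B x) -> forall x, B x -> Q x].
Proof.
move=> idJ noJ.
pose T := {Q : D -> Prop | [/\ is_ideal Q, ~ has_GV Q & forall x, J x -> Q x]}.
pose R (Q1 Q2 : T) := `[< forall x, sval Q1 x -> sval Q2 x >].
pose J' : T := exist _ J (And3 idJ noJ (fun _ h => h)).
have [[Q [idQ noQ JQ]] maxQ] : exists Q, premaximal R Q.
  apply: (ZL_preorder J') => [Q|Q1 Q2 Q3|F chainF].
  - exact/asboolP.
  - by move=> /asboolP Q12 /asboolP Q23; apply/asboolP => x /Q12 /Q23.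
  have [[Q0 FQ0] | noF] := pselect (exists Q, F Q); last first.
    by exists J' => Q FQ; case: noF; exists Q.
  have [||idU noU] := @chain_union_GV_free T F sval Q0 FQ0.
  - by move=> Q1 Q2 FQ1 FQ2; case: (chainF Q1 Q2 FQ1 FQ2) => /asboolP; [left | right].
  - by move=> Q _; case: (svalP Q).
  have JU x : J x -> exists2 Q, F Q & sval Q x.
    by have [_ _ JQ0] := svalP Q0; move=> /JQ0; exists Q0.
  exists (exist _ (fun x => exists2 Q, F Q & sval Q x) (And3 idU noU JU)).
  by move=> Q FQ; apply/asboolP => x Qx; exists Q.
exists Q; split => // B idB noB QB.
pose B' : T := exist _ B (And3 idB noB (fun x Jx => QB x (JQ x Jx))).
by have /asboolP := maxQ B' (introT (asboolP _) QB).
Qed.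

Section MaxGVFree.
Variable Q : D -> Prop.
Hypotheses (idQ : is_ideal Q) (noQ : ~ has_GV Q).
Hypothesis maxQ : forall B, is_ideal B -> ~ has_GV B ->
  (forall x, Q x -> B x) -> forall x, B x -> Q x.

Lemma max_GV_free_wclD z : wclD Q z -> Q z.
Proof.
apply: (maxQ (wclD_ideal idQ)) => [/(has_GV_wclD idQ) // | x]; exact: wclD_sub.
Qed.

Lemma max_GV_free_neq1 : ~ Q 1.
Proof.
by move=> Q1; apply: noQ; exists [:: 1]; [exact: isGV1 | move=> y; rewrite inE => /eqP ->].
Qed.

Lemma max_GV_free_wideal : is_wideal Q.
Proof.
split=> // x; split=> [/ideal_wcl_wclD [d -> /max_GV_free_wclD Qd] | [p [Qp ->]]].
- by exists d.
- exact: ideal_wcl_tofrac.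
Qed.

Lemma max_GV_free_prime : is_prime_wideal Q.
Proof.
split=> [|| a b Qab]; [exact: max_GV_free_wideal | exact: max_GV_free_neq1 |].
have [Qa | nQa] := pselect (Q a); [by left | right].
have [Q0 QD QM] := idQ.
pose Qa := fun z => exists q c, Q q /\ z = q + c * a.
have idQa : is_ideal Qa.
  split=> [|_ _ [q1 [c1 [Qq1 ->]]] [q2 [c2 [Qq2 ->]]]|d _ [q [c [Qq ->]]]].
  - by exists 0, 0; rewrite mul0r addr0.
  - by exists (q1 + q2), (c1 + c2); rewrite mulrDl addrACA; split; first exact: QD.
  - by exists (d * q), (d * c); rewrite mulrDr mulrA; split; first exact: QM.
have QQa x : Q x -> Qa x by exists x, 0; rewrite mul0r addr0.
have [t GVt tQa] : has_GV Qa.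
  apply: contrapT => noQa; apply: nQa; apply: (maxQ idQa noQa QQa).
  by exists 0, 1; rewrite mul1r add0r.
apply: max_GV_free_wclD; exists t => // y /tQa [q [c [Qq ->]]].
by rewrite mulrDr mulrCA (mulrC b a); apply: QD; apply: QM.
Qed.

End MaxGVFree.

Lemma max_wideal_over (J : D -> Prop) : is_ideal J -> ~ has_GV J ->
  exists Q, [/\ is_prime_wideal Q, is_max_wideal Q & forall x, J x -> Q x].
Proof.
move=> idJ noJ; have [Q [idQ noQ JQ maxQ]] := max_GV_free_over idJ noJ.
have pQ := max_GV_free_prime idQ noQ maxQ; have [wQ Q1 _] := pQ.
exists Q; split=> //; split=> // B wB B1.
exact: maxQ (proj1 wB) (wideal_GV_free wB B1).
Qed.

End Ideals.

Section Modules.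
Variables (D : idomainType) (V : lmodType {fraction D}).
Local Notation inK := (@FracField.tofrac D).
Implicit Types (M N : V -> Prop) (g : seq V).

Lemma scale_tofracA (d e : D) (x : V) : inK d *: (inK e *: x) = inK (d * e) *: x.
Proof. by rewrite scalerA tofracM. Qed.

Lemma span_fg_mem g v : v \in g -> span_fg g v.
Proof.
move=> vg; have vg_lt : (index v g < size g)%N by rewrite index_mem.
exists (fun i => ((i : nat) == index v g)%:R).
rewrite (bigD1 (Ordinal vg_lt)) //= eqxx tofrac1 scale1r nth_index // big1 ?addr0 //.
by move=> i; rewrite -val_eqE /= => /negbTE ->; rewrite tofrac0 scale0r.
Qed.

Lemma span_fg_Dsubmod g : is_Dsubmod (span_fg g).
Proof.
split=> [|_ _ [c ->] [c' ->]|d _ [c ->]].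
- by exists (fun _ => 0); rewrite big1 // => i _; rewrite tofrac0 scale0r.
- exists (fun i => c i + c' i).
  by rewrite -big_split; apply: eq_bigr => i _; rewrite tofracD scalerDl.
- exists (fun i => d * c i).
  by rewrite scaler_sumr; apply: eq_bigr => i _; rewrite scale_tofracA.
Qed.

Lemma span_fg_min g N : is_Dsubmod N ->
  (forall v, v \in g -> N v) -> forall x, span_fg g x -> N x.
Proof.
move=> [N0 ND NM] gN _ [c ->]; elim/big_ind: _ => // i _.
by apply/NM/gN; apply: mem_nth.
Qed.

Lemma span_fg_subset g1 g2 : {subset g1 <= g2} -> forall x, span_fg g1 x -> span_fg g2 x.
Proof.
by move=> g12; apply: span_fg_min; [exact: span_fg_Dsubmod | move=> v /g12 /span_fg_mem].
Qed.

Lemma wcl_intro N (s : seq D) x : is_Dsubmod N -> isGV s ->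
  (forall y, y \in s -> N (inK y *: x)) -> wcl N x.
Proof.
move=> [N0 ND NM] GVs sN; exists s; split=> //.
apply: gen_ideal_ind => [|a b|d y /sN]; rewrite ?tofrac0 ?scale0r ?tofracD ?scalerDl //.
- exact: ND.
- by rewrite -scale_tofracA; apply: NM.
Qed.

Lemma wcl_sub N x : is_Dsubmod N -> N x -> wcl N x.
Proof.
move=> hN Nx; apply: (wcl_intro hN (@isGV1 D)) => y; rewrite inE => /eqP ->.
by rewrite tofrac1 scale1r.
Qed.

Lemma wcl_mono N1 N2 : (forall x, N1 x -> N2 x) -> forall x, wcl N1 x -> wcl N2 x.
Proof. by move=> N12 x [s [GVs sN]]; exists s; split=> // j /sN /N12. Qed.

Lemma wcl_Dsubmod N : is_Dsubmod N -> is_Dsubmod (wcl N).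
Proof.
move=> hN; have [N0 ND NM] := hN.
split=> [|x y [s [GVs sx]] [t [GVt ty]]|d x [s [GVs sx]]]; first exact: wcl_sub.
- apply: (wcl_intro hN (isGV_mul GVs GVt)) => _ /allpairsP [[a b] [/= sa tb ->]].
  rewrite scalerDr; apply: ND.
  + by rewrite mulrC -scale_tofracA; apply/NM/sx/gen_ideal_mem.
  + by rewrite -scale_tofracA; apply/NM/ty/gen_ideal_mem.
- exists s; split=> // j /sx.
  by rewrite scale_tofracA mulrC -scale_tofracA; apply: NM.
Qed.

Lemma wcl_idem N x : is_Dsubmod N -> wcl (wcl N) x -> wcl N x.
Proof.
move=> hN [s [GVs sx]]; have [_ _ NM] := hN.
have [t GVt stN] : exists2 t, isGV t &
    forall y u, y \in s -> u \in t -> N (inK u *: (inK y *: x)).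
  apply: isGV_common => [y u d|y /gen_ideal_mem /sx [t [GVt tN]]].
    by rewrite -scale_tofracA; apply: NM.
  by exists t => // u /gen_ideal_mem /tN.
apply: (wcl_intro hN (isGV_mul GVs GVt)) => _ /allpairsP [[y u] [/= ys ut ->]].
by rewrite mulrC -scale_tofracA; apply: stN.
Qed.

Lemma wcl_wmod N : is_Dsubmod N -> is_wmod (wcl N).
Proof.
move=> hN; split=> [|x]; first exact: wcl_Dsubmod.
by split=> [/wcl_idem | /wcl_sub]; apply=> //; apply: wcl_Dsubmod.
Qed.

Lemma wcl_span_fg_min g N : is_wmod N ->
  (forall v, v \in g -> N v) -> forall x, wcl (span_fg g) x -> N x.
Proof. by move=> [hN wN] gN x /(wcl_mono (span_fg_min hN gN)) /wN. Qed.

Definition w_finite N : Prop :=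
  exists2 g, (forall v, v \in g -> N v) & forall x, N x -> wcl (span_fg g) x.

Lemma SM_w_finite M L : is_SM M -> is_wsubmod M L -> w_finite L.
Proof.
move=> [hM ACC] [[hL _] LM]; apply: contrapT => Lnfin.
have new_elt g : exists x, L x /\ ((forall v, v \in g -> L v) -> ~ wcl (span_fg g) x).
  have [gL | gnL] := pselect (forall v, v \in g -> L v).
    have /existsNP [x /not_implyP [Lx gnx]] : ~ forall x, L x -> wcl (span_fg g) x.
      by move=> Lg; apply: Lnfin; exists g.
    by exists x.
  by exists 0; have [] := hL.
have [f fP] := choice new_elt.
pose G n := iter n (fun g => f g :: g) [::].
have GL n v : v \in G n -> L v.
  elim: n v => [|n IHn] v //=; rewrite inE => /predU1P [-> | /IHn //].
  by have [] := fP (G n).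
have GM n : is_wsubmod M (wcl (span_fg (G n))).
  split; first exact/wcl_wmod/span_fg_Dsubmod.
  by apply: wcl_span_fg_min hM _ => v /GL /LM.
have Gsucc n : forall x, wcl (span_fg (G n)) x -> wcl (span_fg (G n.+1)) x.
  by apply/wcl_mono/span_fg_subset => v vG; apply: mem_behead.
have [n0 Gn0] := ACC _ GM Gsucc.
have [_ /(_ (GL n0))] := fP (G n0); apply; apply/(Gn0 n0.+1 (leqnSn n0)).
exact/wcl_sub/span_fg_mem/mem_head/span_fg_Dsubmod.
Qed.

Lemma chain_union_wsubmod M (L : nat -> V -> Prop) :
  (forall n, is_wsubmod M (L n)) -> (forall n x, L n x -> L n.+1 x) ->
  is_wsubmod M (fun x => exists n, L n x).
Proof.
move=> LM L_succ; pose U x := exists n, L n x.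
have bound (s : seq V) : (forall y, y \in s -> U y) -> exists n, forall y, y \in s -> L n y.
  move=> sU; have [|n _ sLn] := @chain_seq_bound _ _ _ L (increasing_chain L_succ) 0 s I.
    by move=> y /sU [n Lny]; exists n.
  by exists n.
have LD n : is_Dsubmod (L n) by have [[]] := LM n.
have UD : is_Dsubmod U.
  split=> [|x y Ux Uy|d x [n Lnx]]; first by exists 0%N; have [] := LD 0%N.
  - have [|n xyL] := bound [:: x; y]; first by move=> z; rewrite !inE => /orP [] /eqP ->.
    by exists n; have [_ LnD _] := LD n; apply: LnD; apply: xyL; rewrite !inE eqxx ?orbT.
  - by exists n; have [_ _ LnM] := LD n; apply: LnM.
split=> [|x [n]]; last by have [_] := LM n; apply.
split=> // x; split=> [[s [GVs sU]] | /(wcl_sub UD) //].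
have [|n sLn] := bound [seq inK y *: x | y <- s].
  by move=> _ /mapP [y ys ->]; apply/sU/gen_ideal_mem.
exists n; have [[_ wLn] _] := LM n; apply/wLn/(wcl_intro (LD n) GVs) => y ys.
exact/sLn/map_f.
Qed.

Lemma w_finite_SM M : is_wmod M ->
  (forall L, is_wsubmod M L -> w_finite L) -> is_SM M.
Proof.
move=> hM Mfin; split=> // L LM L_succ.
have [g gU Ug] := Mfin _ (chain_union_wsubmod LM L_succ).
have [|n _ gLn] := @chain_seq_bound _ _ _ L (increasing_chain L_succ) 0 g I.
  by move=> v /gU [n Lnv]; exists n.
exists n => m nm x; split=> [Lmx|]; last exact: increasing_le.
have [wLn _] := LM n; apply: (wcl_span_fg_min wLn gLn).
by apply: Ug; exists m.
Qed.

Lemma SM_S_SM (S : D -> Prop) M : is_SM M -> S 1 -> is_S_SM S M.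
Proof.
move=> SM_M S1; split=> [|L LM]; first by have [] := SM_M.
have [g gL Lg] := SM_w_finite SM_M LM; have [[hL _] LsubM] := LM.
exists 1; split=> //; exists g; split=> [v /gL /LsubM //|].
split=> [x /Lg | x]; first by rewrite tofrac1 scale1r.
exact: wcl_mono (span_fg_min hL gL) x.
Qed.

Definition finiteness_ideal N : D -> Prop := fun s =>
  exists2 g, (forall v, v \in g -> N v) & forall x, N x -> wcl (span_fg g) (inK s *: x).

Lemma finiteness_ideal_seq N (t : seq D) :
  (forall y, y \in t -> finiteness_ideal N y) ->
  exists2 g, (forall v, v \in g -> N v) &
    forall y x, y \in t -> N x -> wcl (span_fg g) (inK y *: x).
Proof.
elim: t => [|y t IHt] tN; first by exists [::].
have [g1 g1N yg1] := tN y (mem_head y t).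
have [g2 g2N tg2] := IHt (fun z zt => tN z (predU1r _ _ zt)).
exists (g1 ++ g2) => [v | z x]; first by rewrite mem_cat => /orP [/g1N | /g2N].
rewrite inE => /predU1P [-> /yg1 | zt /(tg2 z x zt)]; apply/wcl_mono/span_fg_subset.
- exact/mem_subseq/prefix_subseq.
- exact/mem_subseq/suffix_subseq.
Qed.

Lemma finiteness_ideal_ideal N : is_ideal (finiteness_ideal N).
Proof.
split=> [|a b aN bN|d a [g gN ag]].
- exists [::] => // x _; rewrite tofrac0 scale0r.
  by apply/wcl_sub; have [] := span_fg_Dsubmod [::].
- have [|g gN abg] := @finiteness_ideal_seq N [:: a; b].
    by move=> y; rewrite !inE => /orP [] /eqP ->.
  exists g => // x Nx; rewrite tofracD scalerDl.
  have [_ gD _] := wcl_Dsubmod (span_fg_Dsubmod g).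
  by apply: gD; apply: abg; rewrite ?inE ?eqxx ?orbT.
- exists g => // x /ag; rewrite -scale_tofracA.
  by have [_ _ gM] := wcl_Dsubmod (span_fg_Dsubmod g); apply: gM.
Qed.

Lemma finiteness_ideal_GV N : has_GV (finiteness_ideal N) -> w_finite N.
Proof.
move=> [t GVt /finiteness_ideal_seq [g gN tg]]; exists g => // x Nx.
apply/wcl_idem; first exact: span_fg_Dsubmod.
apply: (wcl_intro (wcl_Dsubmod (span_fg_Dsubmod g)) GVt) => y yt.
exact: tg.
Qed.

Lemma S_w_finite_finiteness_ideal (S : D -> Prop) M N :
  is_wsubmod M N -> S_w_finite S M N -> exists2 s, S s & finiteness_ideal N s.
Proof.
move=> [wN _] [s [Ss [g [_ [Ng gN]]]]]; exists s => //; exists g => // v vg.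
have [_ wNN] := wN; apply/wNN/gN.
exact/wcl_sub/span_fg_mem/vg/span_fg_Dsubmod.
Qed.

Lemma local_SM M : is_wmod M ->
  (forall Q, is_prime_wideal Q -> is_max_wideal Q -> is_P_SM Q M) -> is_SM M.
Proof.
move=> hM locM; apply: w_finite_SM => // N NM.
apply: finiteness_ideal_GV; apply: contrapT => noGV.
have [Q [pQ mQ NQ]] := max_wideal_over (finiteness_ideal_ideal N) noGV.
have [_ /(_ N NM) /(S_w_finite_finiteness_ideal NM) [s nQs /NQ]] := locM Q pQ mQ.
exact: nQs.
Qed.

End Modules.

Theorem proposition3p4 (D : idomainType) (V : lmodType {fraction D})
  (M : V -> Prop) :
  is_wmod M ->
  (is_SM M <-> (forall P : D -> Prop, is_prime_wideal P -> is_P_SM P M)) /\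
  (is_SM M <-> (forall m : D -> Prop, is_max_wideal m -> is_P_SM m M)).
Proof.
move=> hM; split; split=> [SM_M P [_ P1 _] | locM].
- exact: SM_S_SM.
- by apply: local_SM => // Q pQ _; apply: locM.
- exact: SM_S_SM.
- by apply: local_SM => // Q _ mQ; apply: locM.
Qed.
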